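(* Let $G$ be a cograph. A coloring $\sigma$ of $G$ is recursively minimal if and only if it is an hc-coloring.
   Context: All graphs are finite, simple and undirected. A (proper vertex) coloring of $G=(V,E)$ is a surjective map $\sigma:V\to S$ with $\sigma(x)\neq\sigma(y)$ whenever $xy\in E$; $\chi(G)$ is the chromatic number. A cograph is a graph that is $K_1$, or a disjoint union of cographs, or a join of cographs. Color-minimal cographs are colored graphs $(G,\sigma)$ ($\sigma$ a proper coloring) defined recursively: $(G,\sigma)$ is color-minimal if $|\sigma(V)|=\chi(G)$ and either $G=K_1$, or $G$ is the disjoint union, or the join, of at least two graphs $G_i$ such that each $(G_i,\sigma|_{V(G_i)})$ is a color-minimal cograph. A coloring $\sigma$ of $G$ is recursively minimal if $(G,\sigma)$ is a color-minimal cograph. A cotree $(T,t)$ of a cograph $G$ is a rooted tree $T$ with leaf set $V$ and a labeling $t:V^0(T)\to\{0,1\}$ of its inner vertices such that for every inner vertex $u$, $G(u):=G[L(T(u))]$ (with $L(T(u))$ the leaves descending from $u$) is the disjoint union (if $t(u)=0$) or the join (if $t(u)=1$) of the graphs $G(v)$, $v$ a child of $u$. It is binary if every inner vertex has exactly two children. A coloring $\sigma$ is an hc-coloring with respect to a binary cotree $(T,t)$ if for every inner vertex $u$ with children $v_1,v_2$: if $t(u)=1$ then $\sigma(L(T(v_1)))\cap\sigma(L(T(v_2)))=\emptyset$, and if $t(u)=0$ then one of $\sigma(L(T(v_1)))$, $\sigma(L(T(v_2)))$ contains the other. A coloring of $G$ is an hc-coloring of $G$ if it is an hc-coloring with respect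 to some binary cotree of $G$. *)

From mathcomp Require Import all_boot.
Set Implicit Arguments. Unset Strict Implicit. Unset Printing Implicit Defensive.

(* A simple graph is a finite type T with a symmetric irreflexive relation e.
   Subgraphs G[A] are handled through vertex sets A : {set T}. *)
Section Cographs.
Variables (T : finType) (e : rel T).

Definition colorable (A : {set T}) (k : nat) : bool :=
  [exists f : {ffun T -> 'I_k},
     [forall x in A, forall y in A, e x y ==> (f x != f y)]].

(* chromatic number of G[A] (any proper coloring uses at most #|T| colors) *)
Definition chi (A : {set T}) : nat :=
  \big[minn/#|T|]_(k < #|T|.+1 | colorable A k) k.

Definition is_union_of (P : {set {set T}}) : bool :=
  [forall B in P, forall C in P,
     (B != C) ==> [forall x in B, forall y in C, ~~ e x y]].
Definition is_join_of (P : {set {set T}}) : bool :=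
  [forall B in P, forall C in P,
     (B != C) ==> [forall x in B, forall y in C, e x y]].

Inductive cograph : {set T} -> Prop :=
| cograph_K1 (x : T) : cograph [set x]
| cograph_op (P : {set {set T}}) (A : {set T}) :
    partition P A -> 1 < #|P| -> (is_union_of P \/ is_join_of P) ->
    (forall B, B \in P -> cograph B) -> cograph A.

Variable S : finType.

Definition coloring (s : T -> S) : Prop :=
  (forall x y, e x y -> s x != s y) /\ (forall c : S, exists x, s x = c).

Inductive color_minimal (s : T -> S) : {set T} -> Prop :=
| cm_K1 (x : T) : #|s @: [set x]| = chi [set x] -> color_minimal s [set x]
| cm_op (P : {set {set T}}) (A : {set T}) :
    #|s @: A| = chi A ->
    partition P A -> 1 < #|P| -> (is_union_of P \/ is_join_of P) ->
    (forall B, B \in P -> color_minimal s B) -> color_minimal s A.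

Definition recursively_minimal (s : T -> S) : Prop :=
  color_minimal s [set: T].

(* binary rooted trees with leaves in T and inner labels in bool
   (true = 1 = join, false = 0 = disjoint union) *)
Inductive btree : Type :=
| BLeaf of T
| BNode of bool & btree & btree.

Fixpoint leaves (t : btree) : seq T :=
  match t with
  | BLeaf v => [:: v]
  | BNode _ l r => leaves l ++ leaves r
  end.

Fixpoint cotree_nodes_ok (t : btree) : Prop :=
  match t with
  | BLeaf _ => True
  | BNode b l r =>
      [/\ cotree_nodes_ok l, cotree_nodes_ok r &
          forall x y, x \in leaves l -> y \in leaves r -> e x y = b]
  end.

Definition binary_cotree (t : btree) : Prop :=
  [/\ uniq (leaves t), (forall v : T, v \in leaves t) & cotree_nodes_ok t].

Definition leafset (t : btree) : {set T} := [set x | x \in leaves t].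

Fixpoint hc_wrt (s : T -> S) (t : btree) : Prop :=
  match t with
  | BLeaf _ => True
  | BNode b l r =>
      [/\ hc_wrt s l, hc_wrt s r &
          if b then [disjoint s @: leafset l & s @: leafset r]
          else (s @: leafset l \subset s @: leafset r) ||
               (s @: leafset r \subset s @: leafset l)]
  end.

Definition hc_coloring (s : T -> S) : Prop :=
  exists t, binary_cotree t /\ hc_wrt s t.

End Cographs.

From mathcomp Require Import all_boot.
Set Implicit Arguments. Unset Strict Implicit. Unset Printing Implicit Defensive.

(* Both notions are checked node by node along a binary cotree.  If the
   hc-condition holds at every node u with children v1, v2, then by induction
   |s(G(u))| = chi(G(u)): at a join the colour sets of the children are
   disjoint, so |s(G(u))| = chi(G(v1)) + chi(G(v2)) <= chi(G(u)); at a disjoint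
   union one colour set contains the other, so |s(G(u))| = chi(G(vi)) <= chi(G(u))
   for some i.
   Conversely, a colour-minimal decomposition of G into G1, ..., Gk is turned
   into a binary cotree that adds the Gi one at a time.  At a join the colour
   sets are disjoint because s is proper.  At a disjoint union, let G0 be a part
   with the most colours and add it first: renaming the colours of each part to
   0, ..., |s(Gi)| - 1 shows chi(G) <= |s(G0)|, so by minimality s(G0) = s(G),
   and each later part only uses colours already present. *)

Lemma partition_pair (T : finType) (L R : {set T}) :
  L != set0 -> R != set0 -> [disjoint L & R] -> partition [set L; R] (L :|: R).
Proof.
move=> L_neq0 R_neq0 LR; apply: partitionU1 => //.
have P0 : partition set0 (set0 : {set T}) by rewrite partition_set0.
have R0 : [disjoint R & set0] by rewrite -setI_eq0 setI0.
by have := partitionU1 P0 R_neq0 R0; rewrite !setU0.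
Qed.

Lemma bigmin_le (I : eqType) (r : seq I) (P : pred I) (F : I -> nat) x j :
  j \in r -> P j -> \big[minn/x]_(i <- r | P i) F i <= F j.
Proof.
elim: r => // i r IHr; rewrite inE big_cons => /orP[/eqP <- -> | jr Pj].
  exact: geq_minl.
by case: ifP => _; [rewrite geq_min IHr ?orbT | apply: IHr].
Qed.

Section Chromatic.
Variables (T : finType) (e : rel T).

Definition proper_on (X : eqType) (f : T -> X) (A : {set T}) :=
  {in A &, forall x y, e x y -> f x != f y}.

Lemma colorableP A k :
  reflect (exists f : T -> 'I_k, proper_on f A) (colorable e A k).
Proof.
apply: (iffP existsP) => [[f /forall_inP fP] | [f fP]].
- by exists f => x y xA yA; apply/implyP/(forall_inP (fP x xA)).
- exists [ffun x => f x]; apply/forall_inP => x xA; apply/forall_inP => y yA.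
  by rewrite !ffunE; apply/implyP/fP.
Qed.

Lemma chi_le_cardT A : chi e A <= #|T|.
Proof.
by apply: (big_ind (fun k => k <= #|T|)) => // [k l|[k]]; [rewrite geq_min => ->|].
Qed.

Lemma chi_le A k : colorable e A k -> chi e A <= k.
Proof.
move=> Ak; have [kT | /ltnW kT] := leqP k #|T|; last first.
  exact: leq_trans (chi_le_cardT A) kT.
apply: (@bigmin_le _ _ _ _ _ (Ordinal (kT : k < #|T|.+1))) => //.
exact: mem_index_enum.
Qed.

Lemma colorable_nat (g : T -> nat) (A : {set T}) k :
  A != set0 -> proper_on g A -> {in A, forall x, g x < k} -> colorable e A k.
Proof.
case/set0Pn=> a aA gP gk; have k_gt0 : 0 < k := leq_ltn_trans (leq0n _) (gk a aA).
apply/colorableP; exists (fun x => insubd (Ordinal k_gt0) (g x)) => x y xA yA exy.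
apply: contra_neq (gP x y xA yA exy) => /(congr1 val).
by rewrite !insubdK //; apply: gk.
Qed.

Definition color_index (X : finType) (f : T -> X) (B : {set T}) (x : T) :=
  index (f x) (enum (f @: B)).

Lemma color_index_lt (X : finType) (f : T -> X) (B : {set T}) x :
  x \in B -> color_index f B x < #|f @: B|.
Proof. by move=> xB; rewrite cardE index_mem (mem_enum (f @: B)) imset_f. Qed.

Lemma color_index_inj (X : finType) (f : T -> X) (B : {set T}) :
  {in B &, forall x y, color_index f B x = color_index f B y -> f x = f y}.
Proof.
move=> x y xB yB; apply: (index_inj (f x));
  by rewrite (mem_enum (f @: B)) imset_f.
Qed.

Lemma chi_le_card_imset (X : finType) (f : T -> X) (A : {set T}) :
  A != set0 -> proper_on f A -> chi e A <= #|f @: A|.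
Proof.
move=> A_neq0 fP; apply/chi_le/(colorable_nat (g := color_index f A)) => //.
  move=> x y xA yA /(fP x y xA yA); apply: contraNneq.
  by move/(color_index_inj xA yA) ->.
by move=> x; apply: color_index_lt.
Qed.

Definition is_op_of (b : bool) (P : {set {set T}}) :=
  if b then is_join_of e P else is_union_of e P.

Lemma is_op_ofP (b : bool) (P : {set {set T}}) :
  reflect {in P &, forall B C : {set T},
             B != C -> {in B & C, forall x y, e x y = b}}
          (is_op_of b P).
Proof.
rewrite /is_op_of /is_join_of /is_union_of.
case: b; apply: (iffP forall_inP) => [opP B C BP CP BC x y xB yC | opP B BP].
- have /forall_inP/(_ C CP)/implyP/(_ BC)/forall_inP/(_ x xB) := opP B BP.
  by move/forall_inP/(_ y yC).
- apply/forall_inP => C CP; apply/implyP => BC; apply/forall_inP => x xB.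
  by apply/forall_inP => y yC; rewrite (opP B C).
- have /forall_inP/(_ C CP)/implyP/(_ BC)/forall_inP/(_ x xB) := opP B BP.
  by move/forall_inP/(_ y yC)/negbTE.
- apply/forall_inP => C CP; apply/implyP => BC; apply/forall_inP => x xB.
  by apply/forall_inP => y yC; rewrite (opP B C).
Qed.

Lemma chi_union_le (X : finType) (f : T -> X) P (A : {set T}) m :
  partition P A -> is_union_of e P -> A != set0 -> proper_on f A ->
  {in P, forall B : {set T}, #|f @: B| <= m} -> chi e A <= m.
Proof.
move=> PA /(is_op_ofP false) unionP A_neq0 fP Pm.
have coverP := cover_partition PA.
have blockP x : x \in A -> pblock P x \in P by rewrite -coverP => /pblock_mem.
have in_block x : x \in A -> x \in pblock P x by rewrite mem_pblock coverP.
apply/chi_le/(colorable_nat (g := fun x => color_index f (pblock P x) x)) => //.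
  move=> x y xA yA exy; have same_block : pblock P x = pblock P y.
    apply/eqP; apply: contraTT exy => xy_sep.
    by rewrite (unionP _ _ (blockP x xA) (blockP y yA) xy_sep) ?in_block.
  have xB := in_block x xA; rewrite same_block in xB.
  apply: contraNneq (fP x y xA yA exy); rewrite same_block.
  by move/(color_index_inj xB (in_block y yA)) ->.
move=> x xA; apply: leq_trans (color_index_lt f (in_block x xA)) _.
exact: Pm (blockP x xA).
Qed.

Lemma is_op_of_pair b (L R : {set T}) :
  symmetric e -> {in L & R, forall x y, e x y = b} -> is_op_of b [set L; R].
Proof.
move=> e_sym LR; apply/is_op_ofP => B C; rewrite !inE.
move=> /orP[]/eqP-> /orP[]/eqP->; rewrite ?eqxx // => _ x y xR yL.
by rewrite e_sym LR.
Qed.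

Lemma disjoint_imset_join (X : finType) (f : T -> X) (L R : {set T}) :
  proper_on f (L :|: R) -> {in L & R, forall x y, e x y} ->
  [disjoint f @: L & f @: R].
Proof.
move=> fP LR; rewrite -setI_eq0; apply/set0Pn => -[_ /setIP[/imsetP[x xL ->]]].
case/imsetP=> y yR /eqP; apply/negP/fP; rewrite ?inE ?xL ?yR ?orbT //.
exact: LR.
Qed.

Hypothesis e_irr : irreflexive e.

Lemma chi_colorable A : colorable e A (chi e A).
Proof.
apply: (big_ind (colorable e A)) => [|k l Ak Al|//]; last first.
  by rewrite /minn; case: ifP.
apply/colorableP; exists (@enum_rank T) => x y _ _; apply: contraTneq.
by move/enum_rank_inj ->; rewrite e_irr.
Qed.

Lemma chi_subset (B A : {set T}) : B != set0 -> B \subset A -> chi e B <= chi e A.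
Proof.
move=> B_neq0 BA; have /colorableP[f fP] := chi_colorable A.
apply: leq_trans (chi_le_card_imset B_neq0 _) _.
  by move=> x y xB yB; apply: fP; apply: (subsetP BA).
by apply: leq_trans (max_card _) _; rewrite card_ord.
Qed.

Lemma chi_join (L R : {set T}) : L != set0 -> R != set0 ->
  {in L & R, forall x y, e x y} -> chi e L + chi e R <= chi e (L :|: R).
Proof.
move=> L_neq0 R_neq0 LR; have /colorableP[f fP] := chi_colorable (L :|: R).
have fL : proper_on f L by move=> x y xL yL; apply: fP; rewrite inE ?xL ?yL.
have fR : proper_on f R by move=> x y xR yR; apply: fP; rewrite inE ?xR ?yR ?orbT.
apply: leq_trans (leq_add (chi_le_card_imset L_neq0 fL)
                          (chi_le_card_imset R_neq0 fR)) _.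
have := leq_card_setU (f @: L) (f @: R).
rewrite disjoint_imset_join // => -[_ /eqP <-].
by rewrite -imsetU; apply: leq_trans (max_card _) _; rewrite card_ord.
Qed.

Lemma chi_set1 x : chi e [set x] = 1.
Proof.
apply/eqP; rewrite eqn_leq; apply/andP; split.
  apply: chi_le; apply/colorableP; exists (fun=> ord0) => y z /set1P-> /set1P->.
  by rewrite e_irr.
have /colorableP[f _] := chi_colorable [set x].
by case: (chi e [set x]) f => // f; case: (f x).
Qed.

End Chromatic.

Section Leaves.
Variable T : finType.

Lemma leafset_leaf (v : T) : leafset (BLeaf v) = [set v].
Proof. by apply/setP => x; rewrite !inE. Qed.

Lemma leafset_node b (l r : btree T) :
  leafset (BNode b l r) = leafset l :|: leafset r.
Proof. by apply/setP => x; rewrite !inE mem_cat. Qed.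

Lemma leafset_neq0 (t : btree T) : leafset t != set0.
Proof.
apply/set0Pn; elim: t => [v | b l [v vl] r _]; first by exists v; rewrite !inE.
by exists v; rewrite leafset_node inE vl.
Qed.

Lemma uniq_leaves_node b (l r : btree T) :
  uniq (leaves (BNode b l r)) =
  [&& uniq (leaves l), [disjoint leafset l & leafset r] & uniq (leaves r)].
Proof.
rewrite /= cat_uniq; congr [&& _, _ & _]; rewrite -setI_eq0; apply/hasPn/eqP.
  by move=> lr; apply/setP => x; rewrite !inE; apply/andP => -[xl /lr/negP].
move/setP=> lr x xr; apply/negP => xl.
by have := lr x; rewrite !inE xl xr.
Qed.

End Leaves.

Section ColorMinimal.
Variables (T S : finType) (e : rel T) (s : T -> S).
Hypotheses (e_sym : symmetric e) (e_irr : irreflexive e).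
Hypothesis s_proper : forall x y, e x y -> s x != s y.

Let s_proper_on A : proper_on e s A.
Proof. by move=> x y _ _; apply: s_proper. Qed.

Definition hc_split (b : bool) (L R : {set T}) :=
  if b then [disjoint s @: L & s @: R]
  else (s @: L \subset s @: R) || (s @: R \subset s @: L).

Definition hc_cotree_of (A : {set T}) (t : btree T) :=
  [/\ uniq (leaves t), leafset t = A, cotree_nodes_ok e t & hc_wrt s t].

Lemma hc_cotree_node b L R tL tR :
  hc_cotree_of L tL -> hc_cotree_of R tR -> [disjoint L & R] ->
  {in L & R, forall x y, e x y = b} -> hc_split b L R ->
  hc_cotree_of (L :|: R) (BNode b tL tR).
Proof.
move=> [uL <- okL hcL] [uR <- okR hcR] LR LRb LRs; split.
- by rewrite uniq_leaves_node uL uR LR.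
- by rewrite leafset_node.
- by split=> // x y xL yR; apply: LRb; rewrite inE.
- by split.
Qed.

Lemma card_color_minimal A : color_minimal e s A -> #|s @: A| = chi e A.
Proof. by case. Qed.

Lemma card_colors_node b (L R : {set T}) :
  L != set0 -> R != set0 -> {in L & R, forall x y, e x y = b} ->
  #|s @: L| = chi e L -> #|s @: R| = chi e R -> hc_split b L R ->
  #|s @: (L :|: R)| = chi e (L :|: R).
Proof.
move=> L_neq0 R_neq0 LRb sL sR LRs; apply/eqP; rewrite eqn_leq.
rewrite chi_le_card_imset ?setU_eq0 ?negb_and ?L_neq0 // andbT imsetU.
case: b LRb LRs => LRb /= LRs.
  have := leq_card_setU (s @: L) (s @: R); rewrite LRs => -[_ /eqP ->].
  by rewrite sL sR chi_join.
case/orP: LRs => [/setUidPr-> | /setUidPl->]; [rewrite sR | rewrite sL].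
  by rewrite chi_subset ?subsetUr.
by rewrite chi_subset ?subsetUl.
Qed.

Lemma color_minimal_leafset (t : btree T) :
  uniq (leaves t) -> cotree_nodes_ok e t -> hc_wrt s t ->
  color_minimal e s (leafset t).
Proof.
elim: t => [v _ _ _ | b l IHl r IHr].
  by rewrite leafset_leaf; apply: cm_K1; rewrite imset_set1 cards1 chi_set1.
rewrite uniq_leaves_node => /and3P[ul lr ur] [okl okr lrb] [hcl hcr lrs].
have {}lrb : {in leafset l & leafset r, forall x y, e x y = b}.
  by move=> x y; rewrite !inE; apply: lrb.
have [l_neq0 r_neq0] := (leafset_neq0 l, leafset_neq0 r).
have cml := IHl ul okl hcl; have cmr := IHr ur okr hcr.
rewrite leafset_node; apply: (cm_op (P := [set leafset l; leafset r])).
- exact: card_colors_node l_neq0 r_neq0 lrb (card_color_minimal cml)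
    (card_color_minimal cmr) lrs.
- exact: partition_pair.
- rewrite cards2 ltnS lt0b; apply: contraTneq lr => ->.
  by rewrite -setI_eq0 setIid.
- by case: b {lrs} lrb => /(is_op_of_pair e_sym); [right | left].
- by move=> B; rewrite !inE => /orP[]/eqP->.
Qed.

Lemma colors_union_argmax (P : {set {set T}}) A B0 :
  partition P A -> is_union_of e P -> #|s @: A| = chi e A -> B0 \in P ->
  {in P, forall B : {set T}, #|s @: B| <= #|s @: B0|} -> s @: A = s @: B0.
Proof.
move=> PA uP sA B0P B0max; have B0A := partitionS PA B0P.
have A_neq0 : A != set0.
  by apply: contraNneq (partition_neq0 PA B0P) => A0; rewrite -subset0 -A0.
apply/esym/eqP; rewrite eqEcard imsetS //= sA.
by apply: (chi_union_le PA uP A_neq0 _ B0max); apply: s_proper_on.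
Qed.

Lemma hc_cotree_cover b (P : {set {set T}}) B0 :
  trivIset P -> is_op_of e b P ->
  {in P, forall B : {set T}, exists t, hc_cotree_of B t} -> B0 \in P ->
  (~~ b -> {in P, forall B : {set T}, s @: B \subset s @: B0}) ->
  forall Q : {set {set T}}, Q \subset P -> B0 \in Q ->
  exists t, hc_cotree_of (cover Q) t.
Proof.
move=> trivP /is_op_ofP opP treeP B0P B0dom Q.
have [n] := ubnP #|Q|; elim: n Q => // n IHn Q ltQn QP B0Q.
have [B /andP[BQ BB0] | onlyB0] := pickP [pred B in Q | B != B0]; last first.
  suff -> : Q = [set B0] by rewrite cover1; apply: treeP.
  apply/eqP; rewrite eqEsubset sub1set B0Q andbT; apply/subsetP => B BQ.
  by rewrite inE; apply: contraFT (onlyB0 B) => BB0; rewrite /= BQ.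
have BP := subsetP QP B BQ; have [tB tBP] := treeP B BP.
have [tQ tQP] : exists t, hc_cotree_of (cover (Q :\ B)) t.
  apply: IHn; last by rewrite !inE eq_sym BB0.
    by rewrite (cardsD1 B Q) BQ add1n ltnS in ltQn.
  exact: subset_trans (subsetDl _ _) QP.
have edges : {in cover (Q :\ B) & B, forall x y, e x y = b}.
  move=> x y /bigcupP[C /setD1P[CB CQ] xC] yB.
  exact: opP C B (subsetP QP C CQ) BP CB x y xC yB.
have coverQ : cover Q = cover (Q :\ B) :|: B.
  by rewrite /cover (big_setD1 B BQ) setUC.
exists (BNode b tQ tB); rewrite coverQ; apply: hc_cotree_node => //.
  rewrite disjoint_sym; apply/bigcup_disjointP => C /setD1P[CB CQ].
  by apply: (trivIsetP trivP) => //; [exact: (subsetP QP) | rewrite eq_sym].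
case: b edges {opP} B0dom => edges B0dom /=; first exact: disjoint_imset_join.
apply/orP; right; apply: subset_trans (B0dom isT B BP) (imsetS _ _).
by apply: bigcup_sup; rewrite !inE eq_sym BB0.
Qed.

Lemma hc_cotree_of_color_minimal A :
  color_minimal e s A -> exists t, hc_cotree_of A t.
Proof.
elim=> {A} [x _ | P A sA PA P_gt1 opP _ treeP].
  by exists (BLeaf x); split; rewrite ?leafset_leaf.
have [B1 B1P] : exists B1, B1 \in P by apply/card_gt0P/ltnW.
have [b [B0 [B0P bP B0dom]]] : exists b B0, [/\ B0 \in P, is_op_of e b P &
    ~~ b -> {in P, forall B : {set T}, s @: B \subset s @: B0}].
  case: opP => [uP | jP]; last by exists true, B1.
  have [B0 B0P B0max] := @arg_maxnP _ B1 (mem P) (fun B => #|s @: B|) B1P.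
  exists false, B0; split => // _ B BP.
  rewrite -(colors_union_argmax PA uP sA B0P B0max).
  exact/imsetS/(partitionS PA BP).
rewrite -(cover_partition PA).
exact: (hc_cotree_cover (partition_trivIset PA) bP treeP B0P B0dom (subxx P) B0P).
Qed.

Lemma color_minimal_hc_cotreeP A :
  color_minimal e s A <-> exists t, hc_cotree_of A t.
Proof.
split; first exact: hc_cotree_of_color_minimal.
by case=> t [ut <- okt hct]; apply: color_minimal_leafset.
Qed.

Lemma hc_cotree_ofT t :
  hc_cotree_of [set: T] t <-> binary_cotree e t /\ hc_wrt s t.
Proof.
have leafsetT : leafset t = [set: T] <-> forall v, v \in leaves t.
  split=> [/setP tT v | tT]; first by have := tT v; rewrite !inE.
  by apply/setP => v; rewrite !inE tT.
split=> [[ut /leafsetT tT okt hct] | [[ut tT okt] hct]]; split => //.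
exact/leafsetT.
Qed.

End ColorMinimal.

Theorem theorem9 (T S : finType) (e : rel T) (s : T -> S) :
  symmetric e -> irreflexive e ->
  cograph e [set: T] ->
  coloring e s ->
  (recursively_minimal e s <-> hc_coloring e s).
Proof.
move=> e_sym e_irr _ [s_proper _].
apply: iff_trans (color_minimal_hc_cotreeP e_sym e_irr s_proper [set: T]) _.
by split=> -[t tP]; exists t; apply/hc_cotree_ofT.
Qed.
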